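(* Let $R$ be a globally perinormal domain and $W$ a multiplicative subset of $R$. Then $R_W$ is globally perinormal.
   Context: All rings are commutative with identity; an overring of a domain $R$ is a ring between $R$ and its fraction field. A ring extension $A \subseteq B$ satisfies going-down if whenever $\mathfrak{p} \subset \mathfrak{q}$ are primes of $A$ and $Q$ is a prime of $B$ with $Q \cap A = \mathfrak{q}$, there is a prime $P \subseteq Q$ of $B$ with $P \cap A = \mathfrak{p}$. A domain $R$ is globally perinormal if every overring $S$ of $R$ such that $R \subseteq S$ satisfies going-down is a localization of $R$ at some multiplicative set. *)

From mathcomp Require Import all_boot all_algebra.
Set Implicit Arguments. Unset Strict Implicit. Unset Printing Implicit Defensive.
Import GRing.Theory.
Local Open Scope ring_scope.

Section SubringsOfField.
Variable K : fieldType.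

Definition subring (A : K -> Prop) : Prop :=
  A 1 /\ (forall x y, A x -> A y -> A (x - y)) /\
  (forall x y, A x -> A y -> A (x * y)).

Definition frac_in (A : K -> Prop) (x : K) : Prop :=
  exists a b, A a /\ A b /\ b != 0 /\ x = a / b.

Definition overring (A S : K -> Prop) : Prop :=
  subring S /\ (forall x, A x -> S x) /\ (forall x, S x -> frac_in A x).

Definition prime_ideal (S P : K -> Prop) : Prop :=
  (forall x, P x -> S x) /\ P 0 /\
  (forall x y, P x -> P y -> P (x - y)) /\
  (forall s x, S s -> P x -> P (s * x)) /\
  ~ P 1 /\
  (forall x y, S x -> S y -> P (x * y) -> P x \/ P y).

Definition contracts_to (A Q p : K -> Prop) : Prop :=
  forall x, (Q x /\ A x) <-> p x.

Definition going_down (A S : K -> Prop) : Prop :=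
  forall p q Q : K -> Prop,
    prime_ideal A p -> prime_ideal A q -> (forall x, p x -> q x) ->
    prime_ideal S Q -> contracts_to A Q q ->
    exists P : K -> Prop, prime_ideal S P /\ (forall x, P x -> Q x) /\
      contracts_to A P p.

Definition mult_subset (A T : K -> Prop) : Prop :=
  (forall t, T t -> A t) /\ T 1 /\ ~ T 0 /\
  (forall s t, T s -> T t -> T (s * t)).

Definition localization (A T : K -> Prop) (x : K) : Prop :=
  exists a t, A a /\ T t /\ x = a / t.

Definition globally_perinormal (A : K -> Prop) : Prop :=
  forall S, overring A S -> going_down A S ->
    exists T, mult_subset A T /\ (forall x, S x <-> localization A T x).

End SubringsOfField.

(* A domain R, viewed as its image in its fraction field {fraction R}. *)
Definition dom_image (R : idomainType) (x : {fraction R}) : Prop :=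
  exists a : R, x = FracField.tofrac a.

Definition globally_perinormal_dom (R : idomainType) : Prop :=
  globally_perinormal (@dom_image R).

Definition mult_subset_dom (R : idomainType) (W : R -> Prop) : Prop :=
  W 1 /\ ~ W 0 /\ (forall s t, W s -> W t -> W (s * t)).

(* R_W as a subring of {fraction R} (which is also its fraction field). *)
Definition loc_dom (R : idomainType) (W : R -> Prop) (x : {fraction R}) : Prop :=
  exists a w : R, W w /\ x = FracField.tofrac a / FracField.tofrac w.

From mathcomp Require Import all_boot all_algebra.
Set Implicit Arguments. Unset Strict Implicit. Unset Printing Implicit Defensive.
Import GRing.Theory.
Local Open Scope ring_scope.

(* Let S be an overring of R_W satisfying going-down over R_W.  Then S is an
   overring of R, and it satisfies going-down over R as well: primes p ⊆ q of R
   with q = Q ∩ R miss W (the elements of W are units of S), so p R_W ⊆ Q ∩ R_W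
   are primes of R_W, and a prime P ⊆ Q of S lying over p R_W lies over p.
   Global perinormality of R makes S = R_U for some multiplicative U ⊆ R, and
   then also S = (R_W)_U. *)

Section PrimeIdeals.
Variable K : fieldType.
Implicit Types A B S P Q p : K -> Prop.

Lemma subring0 A : subring A -> A 0.
Proof. by case=> A1 [AB _]; rewrite -(subrr 1); apply: AB. Qed.

Lemma prime_ideal_contract B S Q : subring B -> (forall x, B x -> S x) ->
  prime_ideal S Q -> prime_ideal B (fun x => Q x /\ B x).
Proof.
move=> subB BS [_ [Q0 [QB [QM [Q1 Qprime]]]]]; case: (subB) => _ [BB BM].
split; first by move=> x [].
split; first by split=> //; apply: subring0.
split; first by move=> x y [Qx Bx] [Qy By]; split; [apply: QB | apply: BB].
split; first by move=> s x Bs [Qx Bx]; split; [apply: QM => //; apply: BS | apply: BM].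
split; first by case.
move=> x y Bx By [Qxy _].
by case: (Qprime _ _ (BS _ Bx) (BS _ By) Qxy) => ?; [left | right].
Qed.

Lemma contracts_to_trans A B P p' p : (forall x, A x -> B x) ->
  contracts_to B P p' -> contracts_to A p' p -> contracts_to A P p.
Proof.
move=> AB cP cp x; split=> [[Px Ax] | px].
  by apply/cp; split=> //; apply/cP; split=> //; apply: AB.
by have [p'x Ax] := (cp x).2 px; have [Px _] := (cP x).2 p'x.
Qed.

Lemma prime_ideal_unit S Q u : prime_ideal S Q -> u != 0 -> S u^-1 -> ~ Q u.
Proof.
move=> [_ [_ [_ [QM [Q1 _]]]]] u0 Su Qu.
by apply: Q1; rewrite -(mulVf u0); apply: QM.
Qed.

End PrimeIdeals.

Section Localization.
Variable K : fieldType.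
Variables A T B : K -> Prop.
Hypothesis subA : subring A.
Hypothesis multT : mult_subset A T.
Hypothesis B_loc : forall x, B x <-> localization A T x.

Lemma mult_subset_neq0 t : T t -> t != 0.
Proof. by case: multT => _ [_ [T0 _]] Tt; apply/eqP => t0; apply: T0; rewrite -t0. Qed.

Lemma mult_subset_sub t : T t -> A t.
Proof. by case: multT => TA _; apply: TA. Qed.

Lemma mult_subsetM s t : T s -> T t -> T (s * t).
Proof. by case: multT => _ [_ [_ TM]]; apply: TM. Qed.

Lemma subr_frac (a u b v : K) : u != 0 -> v != 0 ->
  a / u - b / v = (a * v - b * u) / (u * v).
Proof. by move=> u0 v0; rewrite -mulNr addf_div // mulNr. Qed.

Lemma localization_subring : subring B.
Proof.
case: subA => A1 [AB AM]; case: (multT) => _ [T1 _].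
split; first by apply/B_loc; exists 1, 1; rewrite divr1.
split=> x y /B_loc [a [u [Aa [Tu ->]]]] /B_loc [b [v [Ab [Tv ->]]]]; apply/B_loc.
  have [Au Av] := (mult_subset_sub Tu, mult_subset_sub Tv).
  exists (a * v - b * u), (u * v); split; first by apply: AB; apply: AM.
  by split; [apply: mult_subsetM | apply: subr_frac; apply: mult_subset_neq0].
exists (a * b), (u * v).
by split; [apply: AM | split; [apply: mult_subsetM | rewrite mulf_div]].
Qed.

Lemma localization_sub x : A x -> B x.
Proof. by move=> Ax; apply/B_loc; exists x, 1; case: multT => _ [T1 _]; rewrite divr1. Qed.

Lemma localization_inv t : T t -> B t^-1.
Proof. by move=> Tt; apply/B_loc; exists 1, t; case: subA => A1 _; rewrite div1r. Qed.

Lemma frac_in_localization x : frac_in B x -> frac_in A x.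
Proof.
case: subA => _ [_ AM].
move=> [_ [_ [/B_loc [a [u [Aa [Tu ->]]]] [/B_loc [b [v [Ab [Tv ->]]]] [bv0 ->]]]]].
have b0 : b != 0 by apply: contraNneq bv0 => ->; rewrite mul0r.
exists (a * v), (u * b); split; first by apply: AM => //; apply: mult_subset_sub.
split; first by apply: AM => //; apply: mult_subset_sub.
split; first by rewrite mulf_neq0 // mult_subset_neq0.
by rewrite invf_div mulf_div.
Qed.

Lemma overring_localization S : overring B S -> overring A S.
Proof.
move=> [subS [BS SB]]; split=> //; split=> x.
  by move/localization_sub; apply: BS.
by move/SB; apply: frac_in_localization.
Qed.

Section ExtendedPrime.
Variable p : K -> Prop.
Hypothesis prime_p : prime_ideal A p.
Hypothesis p_T : forall t, T t -> ~ p t.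

Lemma prime_ideal_mulT x t : A x -> T t -> p (x * t) -> p x.
Proof.
case: prime_p => _ [_ [_ [_ [_ pprime]]]] Ax Tt.
by case/pprime => // [|/p_T []//]; apply: mult_subset_sub.
Qed.

Lemma localization_prime : prime_ideal B (localization p T).
Proof.
case: (prime_p) => pA [p0 [pB [pM [_ pprime]]]]; case: (subA) => _ [_ AM].
have T0 := mult_subset_neq0.
split.
  by move=> _ [a [t [pa [Tt ->]]]]; apply/B_loc; exists a, t; split=> //; apply: pA.
split; first by exists 0, 1; case: multT => _ [T1 _]; rewrite mul0r.
split.
  move=> _ _ [a [u [pa [Tu ->]]]] [b [v [pb [Tv ->]]]].
  exists (a * v - b * u), (u * v).
  split; last by split; [apply: mult_subsetM | apply: subr_frac; apply: T0].
  by rewrite mulrC [b * u]mulrC; apply: pB; apply: pM => //; apply: mult_subset_sub.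
split.
  move=> _ _ /B_loc [b [v [Ab [Tv ->]]]] [a [u [pa [Tu ->]]]].
  exists (b * a), (v * u).
  by split; [apply: pM | split; [apply: mult_subsetM | rewrite mulf_div]].
split.
  move=> [a [t [pa [Tt e]]]]; apply: (p_T Tt).
  by have -> : t = a by apply: (mulIf (invr_neq0 (T0 _ Tt))); rewrite mulfV ?T0 // -e.
move=> _ _ /B_loc [a [u [Aa [Tu ->]]]] /B_loc [b [v [Ab [Tv ->]]]] [c [w [pc [Tw e]]]].
have [Au Av] := (mult_subset_sub Tu, mult_subset_sub Tv).
have abw : a * b * w = c * (u * v).
  by rewrite -[c](divfK (T0 _ Tw)) -e mulf_div [RHS]mulrAC divfK ?mulf_neq0 ?T0.
have /(prime_ideal_mulT _ Tw) : p (a * b * w).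
  by rewrite abw mulrC; apply: pM => //; apply: AM.
case/(_ (AM _ _ Aa Ab))/(pprime _ _ Aa Ab) => [pa | pb].
  by left; exists a, u.
by right; exists b, v.
Qed.

Lemma localization_prime_contract : contracts_to A (localization p T) p.
Proof.
case: (prime_p) => pA _ x; split=> [[[a [t [pa [Tt e]]]] Ax] | px].
  apply: (prime_ideal_mulT Ax Tt).
  by rewrite e divfK // mult_subset_neq0.
by split; [exists x, 1; case: multT => _ [T1 _]; rewrite divr1 | apply: pA].
Qed.

End ExtendedPrime.

Lemma going_down_localization S : (forall x, B x -> S x) ->
  going_down B S -> going_down A S.
Proof.
move=> BS gdB p q Q prime_p prime_q pq prime_Q cQ.
have Q_T t : T t -> ~ Q t.
  move=> Tt; apply: (prime_ideal_unit prime_Q (mult_subset_neq0 Tt)).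
  by apply: BS; apply: localization_inv.
have p_T t : T t -> ~ p t.
  by move=> Tt /pq /cQ [Qt _]; apply: Q_T Tt Qt.
have pe_Q : forall x, localization p T x -> Q x /\ B x.
  move=> _ [a [t [pa [Tt ->]]]]; split.
    case: prime_Q => _ [_ [_ [QM _]]]; rewrite mulrC; apply: QM.
      by apply: BS; apply: localization_inv.
    by have [] := (cQ a).2 (pq _ pa).
  by apply/B_loc; exists a, t; split=> //; case: prime_p => pA _; apply: pA.
have [P [prime_P [PQ cP]]] := gdB _ _ Q (localization_prime prime_p p_T)
  (prime_ideal_contract localization_subring BS prime_Q) pe_Q prime_Q
  (fun x => iff_refl _).
exists P; split=> //; split=> //.
exact: contracts_to_trans localization_sub cP (localization_prime_contract prime_p p_T).
Qed.

Theorem globally_perinormal_localization :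
  globally_perinormal A -> globally_perinormal B.
Proof.
move=> gpA S ovS gdS.
have [subS [BS _]] := ovS; case: subS => _ [_ SM].
have [U [multU SU]] := gpA S (overring_localization ovS)
  (going_down_localization BS gdS).
case: (multU) => UA [U1 [U0 UM]].
exists U; split.
  by split=> // t /UA /localization_sub.
move=> x; split.
  by move/SU => [a [u [Aa [Uu ->]]]]; exists a, u; split=> //; apply: localization_sub.
move=> [b [u [Bb [Uu ->]]]]; apply: SM; first exact: BS.
by apply/SU; exists 1, u; case: subA => A1 _; rewrite div1r.
Qed.

End Localization.

Section DomainImage.
Variable R : idomainType.
Local Notation tofrac := (@FracField.tofrac R).

Definition tofrac_set (W : R -> Prop) (x : {fraction R}) : Prop :=
  exists w, W w /\ x = tofrac w.

Lemma dom_image_subring : subring (@dom_image R).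
Proof.
split; first by exists 1; rewrite rmorph1.
split=> _ _ [a ->] [b ->]; first by exists (a - b); rewrite rmorphB.
by exists (a * b); rewrite rmorphM.
Qed.

Lemma mult_subset_tofrac_set W :
  mult_subset_dom W -> mult_subset (@dom_image R) (tofrac_set W).
Proof.
move=> [W1 [W0 WM]]; split; first by move=> _ [w [_ ->]]; exists w.
split; first by exists 1; rewrite rmorph1.
split.
  by move=> [w [Ww /esym/eqP]]; rewrite tofrac_eq0 => /eqP w0; apply: W0; rewrite -w0.
move=> _ _ [s [Ws ->]] [t [Wt ->]].
by exists (s * t); rewrite rmorphM; split=> //; apply: WM.
Qed.

Lemma loc_dom_localization W x :
  loc_dom W x <-> localization (@dom_image R) (tofrac_set W) x.
Proof.
split=> [[a [w [Ww ->]]] | [_ [_ [[a ->] [[w [Ww ->]] ->]]]]].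
  by exists (tofrac a), (tofrac w); split; [exists a | split=> //; exists w].
by exists a, w.
Qed.

End DomainImage.

Theorem proposition6p1 (R : idomainType) (W : R -> Prop) :
  globally_perinormal_dom R -> mult_subset_dom W ->
  globally_perinormal (@loc_dom R W).
Proof.
move=> gpR hW.
exact: (globally_perinormal_localization (@dom_image_subring R)
  (mult_subset_tofrac_set hW) (loc_dom_localization W) gpR).
Qed.
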